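(* Let $\alpha \in \mathbb{R}_{>0}$ and $M_\alpha = \{f(\alpha) \mid f(x) \in \mathbb{N}_0[x,x^{-1}]\}$ as an additive monoid. The following are equivalent: (a) $M_\alpha$ is a UFM; (b) $M_\alpha$ is an HFM; (c) $\alpha = 1$ or $\alpha$ is transcendental.
   Context: $\mathbb{N}_0[x,x^{-1}]$ denotes the semiring of Laurent polynomials with coefficients in $\mathbb{N}_0$. For an atomic reduced additive monoid $M$ and nonzero $x\in M$, $\mathsf{Z}(x)$ denotes the set of factorizations of $x$ (formal sums of atoms, up to order, adding to $x$) and $\mathsf{L}(x)$ the set of their lengths. $M$ is a UFM (unique factorization monoid) if it is atomic and $|\mathsf{Z}(x)| = 1$ for all nonzero $x$, and an HFM (half-factorial monoid) if it is atomic and $|\mathsf{L}(x)| = 1$ for all nonzero $x$. *)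

From HB Require Import structures.
From mathcomp Require Import all_boot all_order all_algebra.
From mathcomp Require Import reals.
Set Implicit Arguments. Unset Strict Implicit. Unset Printing Implicit Defensive.
Import Order.TTheory GRing.Theory Num.Theory.
Local Open Scope ring_scope.

Section Defs.
Variable R : realType.

(* M_alpha = { f(alpha) | f in N0[x,x^-1] }.  Every Laurent polynomial with
   coefficients in N0 is x^(-n) * p(x) for some n : nat and p : {poly nat}. *)
Definition M_alpha (a : R) (x : R) : Prop :=
  exists (n : nat) (p : {poly nat}),
    x = a ^- n * (map_poly (fun k : nat => k%:R : R) p).[a].

Definition is_atom (M : R -> Prop) (u : R) : Prop :=
  [/\ M u, u != 0 &
      forall y z, M y -> M z -> u = y + z -> y = 0 \/ z = 0].

(* A factorization of x: a finite formal sum of atoms (a sequence of atoms,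
   considered up to order) adding up to x. *)
Definition is_factorization (M : R -> Prop) (x : R) (s : seq R) : Prop :=
  (forall u, u \in s -> is_atom M u) /\ \sum_(u <- s) u = x.

Definition atomic (M : R -> Prop) : Prop :=
  forall x, M x -> x != 0 -> exists s, is_factorization M x s.

Definition UFM (M : R -> Prop) : Prop :=
  atomic M /\
  forall x s t, M x -> x != 0 ->
    is_factorization M x s -> is_factorization M x t -> perm_eq s t.

Definition HFM (M : R -> Prop) : Prop :=
  atomic M /\
  forall x s t, M x -> x != 0 ->
    is_factorization M x s -> is_factorization M x t -> size s = size t.

Definition algebraic (a : R) : Prop :=
  exists p : {poly rat}, p != 0 /\ root (map_poly (@ratr R) p) a.

Definition transcendental (a : R) : Prop := ~ algebraic a.

End Defs.

From HB Require Import structures.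
From mathcomp Require Import all_boot all_order all_algebra.
From mathcomp Require Import reals.
From mathcomp Require Import ring zify.
Import Order.TTheory GRing.Theory Num.Theory.
Local Open Scope ring_scope.

(* Every element of M_alpha is a finite sum of Laurent monomials a ^ z (z : int), and
   multiplication by a ^ z is an automorphism of M_alpha.  Hence the atoms are exactly the
   monomials as soon as 1 is an atom, which atomicity forces, and a factorization is a
   multiset of exponents z with prescribed value of sum a ^ z.  If a is transcendental this
   value determines the multiset; if a = 1 all monomials are 1 and it determines the number
   of terms; either way factorization is unique.  If a <> 1 is algebraic, pick an integer
   polynomial q with q(a) = 0 and, after dividing out powers of X - 1, q(1) <> 0; splitting q
   into its positive and negative parts yields two sums of powers of a with the same value
   but different numbers of terms, which contradicts half-factoriality. *)

Definition sumXn (es : seq nat) : {poly int} := \sum_(e <- es) 'X^e.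

Lemma sumXn_cat es ft : sumXn (es ++ ft) = sumXn es + sumXn ft.
Proof. exact: big_cat. Qed.

Lemma sumXn_map_succ es : sumXn (map S es) = sumXn es * 'X.
Proof. by rewrite /sumXn big_map mulr_suml; apply: eq_bigr => e _; rewrite exprSr. Qed.

Lemma sumXn_nseq0 k : sumXn (nseq k 0%N) = k%:R.
Proof. by elim: k => [|k IHk]; rewrite /sumXn ?big_nil // big_cons -/(sumXn _) IHk mulrS. Qed.

Lemma coef_sumXn es i : (sumXn es)`_i = (count_mem i es)%:R.
Proof.
elim: es => [|e es IHes]; first by rewrite /sumXn big_nil coef0.
by rewrite /sumXn big_cons coefD coefXn -/(sumXn _) IHes /= natrD eq_sym.
Qed.

Lemma horner_sumXn (R : comNzRingType) es (x : R) :
  (map_poly intr (sumXn es)).[x] = \sum_(e <- es) x ^+ e.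
Proof.
rewrite rmorph_sum horner_sum; apply: eq_bigr => e _.
by rewrite rmorphXn /= map_polyX hornerXn.
Qed.

Lemma sumXn_at1 es : (sumXn es).[1] = (size es)%:R.
Proof.
rewrite horner_sum -sum1_size natr_sum.
by apply: eq_bigr => e _; rewrite hornerXn expr1n.
Qed.

Lemma exists_sumXn_sub (q : {poly int}) : exists es ft, q = sumXn es - sumXn ft.
Proof.
elim/poly_ind: q => [|q c [es [ft ->]]]; first by exists [::], [::]; rewrite subrr.
have [k1 [k2 ->]] : exists k1 k2 : nat, c = k1%:R - k2%:R.
  by case: c => k; [exists k, 0%N | exists 0%N, k.+1]; rewrite ?NegzE ?subr0 ?sub0r ?natz.
exists (map S es ++ nseq k1 0%N), (map S ft ++ nseq k2 0%N).
rewrite !sumXn_cat !sumXn_map_succ !sumXn_nseq0 rmorphB /= !polyC_natr.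
ring.
Qed.

Lemma sumXn_inj es ft : sumXn es = sumXn ft -> perm_eq es ft.
Proof.
move=> eq_sum; apply/allP => i _ /=.
by have /eqP := congr1 (fun q : {poly int} => q`_i) eq_sum; rewrite !coef_sumXn eqr_nat.
Qed.

Lemma exists_horner_natr_sum_expr (R : comNzRingType) (p : {poly nat}) (x : R) :
  exists es : seq nat, (map_poly (fun k : nat => k%:R : R) p).[x] = \sum_(e <- es) x ^+ e.
Proof.
elim/poly_ind: p => [|p c [es IHp]]; first by exists [::]; rewrite rmorph0 horner0 big_nil.
exists (nseq c 0%N ++ map S es).
rewrite rmorphD rmorphM /= map_polyX map_polyC /= hornerMXaddC IHp big_cat big_nseq.
rewrite iter_addr_0 big_map mulr_suml addrC; congr (_ + _).
by apply: eq_bigr => e _; rewrite exprSr.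
Qed.

Section Algebraic.
Context {R : realType} {a : R}.

Lemma algebraic_intP :
  algebraic a <-> exists2 q : {poly int}, q != 0 & root (map_poly intr q) a.
Proof.
split=> [[p [p_neq0 pa0]] | [q q_neq0 qa0]].
  have [q [c c_neq0 def_p]] := rat_poly_scale p.
  exists q.
    by apply: contraNneq p_neq0 => q0; rewrite def_p q0 rmorph0 scaler0.
  move: pa0; rewrite /root def_p map_polyZ hornerZ mulf_eq0 fmorph_eq0 invr_eq0.
  rewrite intr_eq0 (negbTE c_neq0) -map_poly_comp.
  by rewrite (eq_map_poly (ratr_int _)).
exists (map_poly intr q); split.
  by rewrite map_poly_eq0_id0 ?intr_eq0 ?lead_coef_eq0.
by rewrite -map_poly_comp (eq_map_poly (ratr_int _)).
Qed.

Lemma transcendental_neq0 : transcendental a -> a != 0.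
Proof.
move=> a_tr; apply/eqP => a0; apply: a_tr; apply/algebraic_intP.
by exists 'X; rewrite ?polyX_eq0 // /root map_polyX hornerX a0.
Qed.

Lemma exists_root_not_root1 {q : {poly int}} : a != 1 -> q != 0 ->
  root (map_poly intr q) a ->
  exists2 r : {poly int}, root (map_poly intr r) a & ~~ root r 1.
Proof.
move=> a_neq1 q_neq0 qa0; have [m [r r1_neq0 def_q]] := multiplicity_XsubC q 1.
exists r; last by rewrite q_neq0 in r1_neq0.
move: qa0; rewrite def_q /root rmorphM rmorphXn rmorphB /= map_polyX map_polyC /=.
rewrite hornerM horner_exp hornerXsubC rmorph1 mulf_eq0 expf_eq0 subr_eq0.
by rewrite (negbTE a_neq1) andbF orbF.
Qed.

Lemma sum_expr_perm_transcendental {es ft : seq nat} : transcendental a ->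
  \sum_(e <- es) a ^+ e = \sum_(e <- ft) a ^+ e -> perm_eq es ft.
Proof.
move=> a_tr eq_sum; apply: sumXn_inj; apply/eqP; rewrite -subr_eq0.
apply/negPn/negP => diff_neq0; apply: a_tr; apply/algebraic_intP.
exists (sumXn es - sumXn ft) => //.
by rewrite /root rmorphB hornerD hornerN !horner_sumXn eq_sum subrr.
Qed.

Lemma sum_expr_size_algebraic : algebraic a -> a != 1 ->
  exists es ft : seq nat,
    \sum_(e <- es) a ^+ e = \sum_(e <- ft) a ^+ e /\ size es != size ft.
Proof.
move=> /algebraic_intP[q q_neq0 qa0] a_neq1.
have [r ra0 r1_neq0] := exists_root_not_root1 a_neq1 q_neq0 qa0.
have [es [ft def_r]] := exists_sumXn_sub r.
exists es, ft; split.
  by apply/eqP; rewrite -subr_eq0 -!horner_sumXn -hornerN -hornerD -rmorphB -def_r.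
apply: contra r1_neq0 => /eqP eq_size.
by rewrite /root def_r hornerD hornerN !sumXn_at1 eq_size subrr.
Qed.

End Algebraic.

Lemma exists_map_of_in_image (T : Type) (U : eqType) (f : T -> U) (s : seq U) :
  (forall u, u \in s -> exists t, u = f t) -> exists ts, s = map f ts.
Proof.
elim: s => [|u s IHs] s_img; first by exists [::].
have [t ->] := s_img u (mem_head u s).
have [ts ->] : exists ts, s = map f ts.
  by apply: IHs => v v_s; apply: s_img; rewrite inE v_s orbT.
by exists (t :: ts).
Qed.

Lemma exists_int_lower_bound (zs : seq int) : exists n : nat, {in zs, forall z, - n%:Z <= z}.
Proof.
exists (\max_(z <- zs) `|z|)%N => z z_zs.
have : (`|z| <= \max_(z <- zs) `|z|)%N by exact: leq_bigmax_seq.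
lia.
Qed.

Lemma absz_shiftK (n : nat) (z : int) : - n%:Z <= z -> (absz (z + n%:Z))%:Z - n%:Z = z.
Proof. by move=> z_ge; rewrite abszE ger0_norm ?addrK // -lerBlDr sub0r. Qed.

Section ExprzShift.
Context {F : fieldType} {a : F}.
Hypothesis a_neq0 : a != 0.

Lemma exprz_subn (e n : nat) : a ^ (e%:Z - n%:Z) = a ^- n * a ^+ e.
Proof. by rewrite addrC expfzDr // -exprnN. Qed.

Lemma sum_exprz_shift {n : nat} {zs : seq int} : {in zs, forall z, - n%:Z <= z} ->
  \sum_(z <- zs) a ^ z = a ^- n * \sum_(e <- [seq absz (z + n%:Z) | z <- zs]) a ^+ e.
Proof.
move=> zs_ge; rewrite big_map mulr_sumr; apply: eq_big_seq => z /zs_ge z_ge.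
by rewrite -exprz_subn absz_shiftK.
Qed.

End ExprzShift.

Lemma sum_exprz_eq0 {F : numFieldType} {a : F} (zs : seq int) :
  0 < a -> (\sum_(z <- zs) a ^ z == 0) = (zs == [::]).
Proof.
move=> a_gt0; case: zs => [|z zs]; first by rewrite big_nil !eqxx.
rewrite big_cons gt_eqF // ltr_wpDr ?exprz_gt0 //.
by apply: sumr_ge0 => w _; rewrite ltW ?exprz_gt0.
Qed.

Lemma sum_exprz_perm_transcendental {R : realType} {a : R} {zs ws : seq int} :
  transcendental a -> \sum_(z <- zs) a ^ z = \sum_(w <- ws) a ^ w -> perm_eq zs ws.
Proof.
move=> a_tr; have a_neq0 := transcendental_neq0 a_tr.
have [n zsws_ge] := exists_int_lower_bound (zs ++ ws).
have zs_ge : {in zs, forall z, - n%:Z <= z}.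
  by move=> z z_zs; apply: zsws_ge; rewrite mem_cat z_zs.
have ws_ge : {in ws, forall z, - n%:Z <= z}.
  by move=> z z_ws; apply: zsws_ge; rewrite mem_cat z_ws orbT.
have an_neq0 : a ^- n != 0 by rewrite invr_eq0 expf_neq0.
rewrite (sum_exprz_shift a_neq0 zs_ge) (sum_exprz_shift a_neq0 ws_ge) => /(mulfI an_neq0).
move/(sum_expr_perm_transcendental a_tr)/(perm_map (fun e : nat => e%:Z - n%:Z)).
rewrite -!map_comp !map_id_in // => z z_in;
  by apply/absz_shiftK/zsws_ge; rewrite mem_cat z_in ?orbT.
Qed.

Lemma UFM_HFM (R : realType) (M : R -> Prop) : UFM M -> HFM M.
Proof.
case=> M_atomic perm_uniq; split=> // x s t Mx x_neq0 fact_s fact_t.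
exact: perm_size (perm_uniq x s t Mx x_neq0 fact_s fact_t).
Qed.

Section MonoidMalpha.
Context {R : realType} {a : R}.
Hypothesis a_gt0 : 0 < a.
Local Notation M := (M_alpha a).

Let a_neq0 : a != 0. Proof. by rewrite gt_eqF. Qed.

Lemma M_alphaP x : M x <-> exists zs : seq int, x = \sum_(z <- zs) a ^ z.
Proof.
split=> [[n [p ->]] | [zs ->]].
  have [es ->] := exists_horner_natr_sum_expr _ p a.
  exists [seq e%:Z - n%:Z | e <- es].
  by rewrite big_map mulr_sumr; apply: eq_bigr => e _; rewrite (exprz_subn a_neq0).
have [n zs_ge] := exists_int_lower_bound zs.
exists n, (\sum_(e <- [seq absz (z + n%:Z) | z <- zs]) 'X^e).
rewrite (sum_exprz_shift a_neq0 zs_ge) rmorph_sum horner_sum; congr (_ * _).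
by apply: eq_bigr => e _; rewrite rmorphXn /= map_polyX hornerXn.
Qed.

Lemma M_alpha_sum_exprz zs : M (\sum_(z <- zs) a ^ z).
Proof. by apply/M_alphaP; exists zs. Qed.

Lemma M_alpha_exprz z : M (a ^ z).
Proof. by apply/M_alphaP; exists [:: z]; rewrite big_seq1. Qed.

Lemma M_alpha_exprzM z {x} : M x -> M (a ^ z * x).
Proof.
move=> /M_alphaP[zs ->]; apply/M_alphaP; exists [seq z + w | w <- zs].
by rewrite big_map mulr_sumr; apply: eq_bigr => w _; rewrite expfzDr.
Qed.

Lemma is_atom_exprzM z {u} : is_atom M u -> is_atom M (a ^ z * u).
Proof.
case=> Mu u_neq0 u_irr; split; [exact: M_alpha_exprzM | by rewrite mulf_neq0 ?expfz_neq0 |].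
move=> y w My Mw def_azu.
have def_u : u = a ^ (- z) * y + a ^ (- z) * w.
  by rewrite -mulrDr -def_azu mulrA -expfzDr // addNr expr0z mul1r.
have [] := u_irr _ _ (M_alpha_exprzM (- z) My) (M_alpha_exprzM (- z) Mw) def_u;
  move/eqP; rewrite mulf_eq0 expfz_eq0 (negbTE a_neq0) andbF => /eqP ->; [by left | by right].
Qed.

Lemma is_atom_exprz {u} : is_atom M u -> exists z, u = a ^ z.
Proof.
case=> /M_alphaP[[|z [|z' zs]] ->] u_neq0 u_irr; first by rewrite big_nil eqxx in u_neq0.
  by exists z; rewrite big_seq1.
have [] := u_irr _ _ (M_alpha_exprz z) (M_alpha_sum_exprz (z' :: zs)) (big_cons _ _ _ _ _ _).
  by move/eqP; rewrite expfz_eq0 (negbTE a_neq0) andbF.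
by move/eqP; rewrite (sum_exprz_eq0 _ a_gt0).
Qed.

Lemma is_atom_exprz_of_1 z : is_atom M 1 -> is_atom M (a ^ z).
Proof. by move/(is_atom_exprzM z); rewrite mulr1. Qed.

Lemma atomic_is_atom1 : atomic M -> is_atom M 1.
Proof.
move=> M_atomic; have M1 : M 1 by rewrite -(expr0z a); exact: M_alpha_exprz.
have [[|u s] [s_atoms sum_s]] := M_atomic 1 M1 (oner_neq0 _).
  by move/eqP: sum_s; rewrite big_nil eq_sym oner_eq0.
have u_atom := s_atoms u (mem_head u s); have [z def_u] := is_atom_exprz u_atom.
by have := is_atom_exprzM (- z) u_atom; rewrite def_u -expfzDr // addNr expr0z.
Qed.

Lemma factorization_exprz {x s} :
  is_factorization M x s -> exists zs, s = [seq a ^ z | z <- zs].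
Proof. by case=> s_atoms _; apply: exists_map_of_in_image => u /s_atoms/is_atom_exprz. Qed.

Lemma is_factorization_exprz zs :
  is_atom M 1 -> is_factorization M (\sum_(z <- zs) a ^ z) [seq a ^ z | z <- zs].
Proof.
move=> atom1; split; last by rewrite big_map.
by move=> u /mapP[z _ ->]; exact: is_atom_exprz_of_1.
Qed.

Lemma UFM_M_alpha_of_uniq :
  (forall zs ws : seq int, \sum_(z <- zs) a ^ z = \sum_(w <- ws) a ^ w ->
     perm_eq [seq a ^ z | z <- zs] [seq a ^ w | w <- ws]) ->
  UFM M.
Proof.
move=> sums_uniq.
have atom1 : is_atom M 1.
  split; [by rewrite -(expr0z a); exact: M_alpha_exprz | exact: oner_neq0 |].
  move=> y w /M_alphaP[ys ->] /M_alphaP[ws ->] def_1.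
  have := sums_uniq [:: 0] (ys ++ ws); rewrite big_seq1 expr0z big_cat /= -def_1.
  move=> /(_ erefl)/perm_size {def_1}; rewrite !size_map size_cat.
  case: ys => [|y0 ys]; first by left; rewrite big_nil.
  by case: ws => [|w0 ws]; [right; rewrite big_nil | rewrite /= addSn addnS].
split=> [x /M_alphaP[zs ->] _ | x s t _ _ fact_s fact_t].
  by exists [seq a ^ z | z <- zs]; exact: is_factorization_exprz.
have [zs def_s] := factorization_exprz fact_s; have [ws def_t] := factorization_exprz fact_t.
case: fact_s fact_t => _ + [_]; rewrite def_s def_t !big_map => sum_s sum_t.
by apply: sums_uniq; rewrite sum_s sum_t.
Qed.

Lemma not_HFM_M_alpha (zs ws : seq int) :
  \sum_(z <- zs) a ^ z = \sum_(w <- ws) a ^ w -> size zs != size ws -> ~ HFM M.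
Proof.
move=> eq_sum size_neq [M_atomic size_uniq].
have atom1 := atomic_is_atom1 M_atomic.
have x_neq0 : \sum_(z <- zs) a ^ z != 0.
  rewrite (sum_exprz_eq0 _ a_gt0); apply: contra size_neq => /eqP zs0.
  by move/eqP: eq_sum; rewrite zs0 big_nil eq_sym (sum_exprz_eq0 _ a_gt0) => /eqP ->.
have fact_ws := is_factorization_exprz ws atom1; rewrite -eq_sum in fact_ws.
have := size_uniq _ _ _ (M_alpha_sum_exprz zs) x_neq0
  (is_factorization_exprz zs atom1) fact_ws.
by rewrite !size_map => /eqP; apply/negP.
Qed.

Lemma UFM_M_alpha : a = 1 \/ transcendental a -> UFM M.
Proof.
case=> [a1 | a_tr]; apply: UFM_M_alpha_of_uniq => zs ws; last first.
  by move/(sum_exprz_perm_transcendental a_tr)/perm_map; apply.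
have map1 (vs : seq int) : [seq a ^ v | v <- vs] = nseq (size vs) 1.
  rewrite -(size_map (fun v => a ^ v)); apply/all_pred1P/allP => _ /mapP[v _ ->].
  by rewrite /= a1 exp1rz.
have sum1 (vs : seq int) : \sum_(v <- vs) a ^ v = (size vs)%:R.
  by rewrite -sum1_size natr_sum; apply: eq_bigr => v _; rewrite a1 exp1rz.
rewrite !sum1 !map1 => /eqP; rewrite eqr_nat => /eqP ->.
exact: perm_refl.
Qed.

Lemma HFM_M_alpha_cases : HFM M -> a = 1 \/ transcendental a.
Proof.
move=> M_hfm; have [-> | a_neq1] := eqVneq a 1; [by left | right => a_alg].
have [es [ft [eq_sum size_neq]]] := sum_expr_size_algebraic a_alg a_neq1.
by apply: (@not_HFM_M_alpha (map Posz es) (map Posz ft)) M_hfm; rewrite ?big_map ?size_map.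
Qed.

End MonoidMalpha.

Theorem proposition5p1 (R : realType) (a : R) (ha : 0 < a) :
  (UFM (M_alpha a) <-> HFM (M_alpha a)) /\
  (HFM (M_alpha a) <-> (a = 1 \/ transcendental a)).
Proof.
split; split.
- exact: UFM_HFM.
- by move/(HFM_M_alpha_cases ha)/(UFM_M_alpha ha).
- exact: HFM_M_alpha_cases.
- by move/(UFM_M_alpha ha)/UFM_HFM.
Qed.
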